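(* Let $\xi=e^{i\pi/5}$, $\tau=\frac{1+\sqrt5}{2}$. For $n\in\mathbb{N}$ let $L(n)=\{\sum_{j=0}^9 n_j\xi^j: n_j\in\mathbb{N}_0,\ \sum_j n_j\le n\}\cap\mathbb{R}$. Let $\mathbb{Z}[\tau]=\mathbb{Z}+\mathbb{Z}\tau$ and let $x\mapsto x'$ be the automorphism $a+b\sqrt5\mapsto a-b\sqrt5$ of $\mathbb{Q}[\sqrt5]$. For a bounded interval $\Omega$ let $\Sigma(\Omega)=\{x\in\mathbb{Z}[\tau]: x'\in\Omega\}$. Then $L(n)\subset\Sigma([-n,n])\cap[-n,n]$.
   Context: $\Sigma(\Omega)$ is the one-dimensional cut-and-project quasicrystal with acceptance window $\Omega$. *)

From HB Require Import structures.
From mathcomp Require Import all_boot all_order all_algebra.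
From mathcomp Require Import all_classical all_reals all_analysis.
From mathcomp Require Import complex.
Set Implicit Arguments. Unset Strict Implicit. Unset Printing Implicit Defensive.
Import Order.TTheory GRing.Theory Num.Theory.
Local Open Scope ring_scope.
Local Open Scope classical_set_scope.
Local Open Scope complex_scope.

Definition xi (R : realType) : R[i] := (cos (pi / 5%:R)) +i* (sin (pi / 5%:R)).

Definition tau (R : realType) : R := (1 + Num.sqrt 5%:R) / 2%:R.
Definition tau' (R : realType) : R := (1 - Num.sqrt 5%:R) / 2%:R.

(* L(n) = { sum_{j=0}^9 n_j xi^j : n_j in N_0, sum n_j <= n } ∩ R,
   real elements viewed as elements x of R via x%:C *)
Definition Lset (R : realType) (n : nat) : set R :=
  [set x : R | exists m : 'I_10 -> nat,
     (\sum_(j < 10) m j <= n)%N /\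
     \sum_(j < 10) (m j)%:R * (xi R) ^+ j = x%:C].

Definition Ztau (R : realType) : set R :=
  [set x : R | exists a b : int, x = a%:~R + b%:~R * tau R].

(* Sigma(Omega) = { x in Z[tau] : x' in Omega }, where for x = a + b tau
   (a, b integers; representation unique since sqrt 5 is irrational)
   x' = a + b tau'. *)
Definition Sigma (R : realType) (Omega : set R) : set R :=
  [set x : R | exists a b : int, x = a%:~R + b%:~R * tau R /\
                                 Omega (a%:~R + b%:~R * tau' R)].

From HB Require Import structures.
From mathcomp Require Import all_boot all_order all_algebra.
From mathcomp Require Import all_classical all_reals all_analysis.
From mathcomp Require Import complex.
From mathcomp Require Import zify ring lra.
Import Order.TTheory GRing.Theory Num.Theory.
Local Open Scope ring_scope.
Local Open Scope classical_set_scope.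
Local Open Scope complex_scope.

(* Since cos (pi/5) = tau/2, each
   cos (j pi/5) is affine in tau with half-integer coefficients and each
   sin (j pi/5) is sin (pi/5) times an integer-affine function of tau. For a real
   x = sum n_j xi^j the imaginary part vanishes, so the irrationality of tau forces
   n_1 + n_4 = n_6 + n_9 and n_2 + n_3 = n_7 + n_8; then the real part is x = a + b tau
   with a, b integers, and evaluating the same cosine table at tau' = 1 - tau gives
   x' = a + b tau'. Both tau and tau' lie in [-1, 2], where every entry of the table
   has absolute value at most 1, hence |x|, |x'| <= sum n_j <= n. *)

Lemma irrational_sqrt_prime (p u v : nat) :
  prime p -> (u ^ 2 = p * v ^ 2)%N -> v = 0%N.
Proof.
move=> p_pr E; case: (posnP v) => // v_gt0.
have : (0 < u ^ 2)%N by rewrite E muln_gt0 prime_gt0 // expn_gt0 v_gt0.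
rewrite expn_gt0 orbF => u_gt0.
have := congr1 (logn p) E.
rewrite lognM ?(prime_gt0 p_pr) ?expn_gt0 ?v_gt0 // !lognX (logn_prime p p_pr) eqxx.
lia.
Qed.

Lemma irrational_sqrt_primez (p : nat) (a b : int) :
  prime p -> a ^+ 2 = p%:Z * b ^+ 2 -> b = 0.
Proof.
move=> p_pr /(congr1 absz); rewrite abszM !abszX => /(irrational_sqrt_prime _ _ _ p_pr).
by move/eqP; rewrite absz_eq0 => /eqP.
Qed.

Lemma norm_sum_natrM_le1 (R : numDomainType) (I : finType) (m : I -> nat) (c : I -> R) :
  (forall i, `|c i| <= 1) -> `|\sum_i (m i)%:R * c i| <= (\sum_i m i)%:R.
Proof.
move=> c_le1; apply: le_trans (ler_norm_sum _ _ _) _.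
rewrite natr_sum; apply: ler_sum => i _.
by rewrite normrM normr_nat ler_piMr.
Qed.

Section Pentagon.
Context {R : realType}.

Lemma sqr_sqrt5 : Num.sqrt (5%:R : R) ^+ 2 = 5%:R.
Proof. by rewrite sqr_sqrtr // ler0n. Qed.

Lemma tau_sqr : tau R ^+ 2 = tau R + 1.
Proof. by rewrite /tau; have := sqr_sqrt5; lra. Qed.

Lemma tau'E : tau' R = 1 - tau R.
Proof. by rewrite /tau /tau'; lra. Qed.

Lemma tau_ge1_le2 : 1 <= tau R <= 2.
Proof.
rewrite /tau; have := sqr_sqrt5; have : 0 <= Num.sqrt (5%:R : R) by [].
by move=> ? ?; apply/andP; split; nra.
Qed.

Lemma tau_irrational (a b : int) : a%:~R + b%:~R * tau R = 0 -> a = 0 /\ b = 0.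
Proof.
move=> ab0.
have b0 : b = 0.
  apply: (@irrational_sqrt_primez 5 (2 * a + b)) => //; apply: (@intr_inj R).
  rewrite rmorphXn /=.
  have -> : (2 * a + b)%:~R = - (b%:~R * Num.sqrt 5%:R) :> R.
    by move: ab0; rewrite /tau rmorphD rmorphM /=; lra.
  by rewrite rmorphM rmorphXn /= sqrrN exprMn sqr_sqrt5 mulrC.
by move: ab0; rewrite b0 mul0r addr0 => /eqP; rewrite intr_eq0 => /eqP.
Qed.

Lemma cos_pi5 : cos (pi / 5%:R) = tau R / 2.
Proof.
set t := pi / 5%:R; set c := cos t.
have pi5 : pi = t *+ 5 by rewrite /t -mulr_natr mulfVK // pnatr_eq0.
have c_gt0 : 0 < c.
  apply: cos_gt0_pihalf; have := @pi_gt0 R; rewrite -/t pi5; lra.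
have cos3 : cos (t *+ 3) = - cos (t *+ 2).
  have -> : t *+ 3 = - (t *+ 2) + pi by rewrite pi5; ring.
  by rewrite cosDpi cosN.
have cos3E : cos (t *+ 3) = cos (t *+ 2) * c - sin (t *+ 2) * sin t.
  by rewrite -cosD; congr cos; ring.
rewrite cos_mulr2n sin_mulr2n -/c in cos3 cos3E.
have := sin2cos2 t; rewrite -/c => sin2.
have cubic : (c + 1) * (4 * c ^+ 2 - 2 * c - 1) = 0 by rewrite cos3 in cos3E; nra.
have quad : 4 * c ^+ 2 - 2 * c - 1 = 0.
  by move/eqP: cubic; rewrite mulf_eq0 => /orP[/eqP|/eqP //]; lra.
have q2 := sqr_sqrt5; have q_ge0 : 0 <= Num.sqrt (5%:R : R) by [].
have roots : (4 * c - 1 - Num.sqrt 5%:R) * (4 * c - 1 + Num.sqrt 5%:R) = 0 by nra.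
by move/eqP: roots; rewrite /tau mulf_eq0 => /orP[/eqP|/eqP]; nra.
Qed.

Lemma sin_pi5_gt0 : 0 < sin (pi / 5%:R : R).
Proof. by apply: sin_gt0_pi; have := @pi_gt0 R; lra. Qed.

(* At [t = tau R] these are [cos (j pi / 5)] and [sin (j pi / 5) / sin (pi / 5)];
   at [t = tau' R], [cos5 t j] is the Galois conjugate [cos (3 j pi / 5)]. *)
Definition cos5 (t : R) (j : nat) : R :=
  match j with
  | 0 => 1 | 1 => t / 2 | 2 => (t - 1) / 2 | 3 => (1 - t) / 2 | 4 => - t / 2
  | 5 => -1 | 6 => - t / 2 | 7 => (1 - t) / 2 | 8 => (t - 1) / 2 | _ => t / 2
  end.

Definition sin5 (t : R) (j : nat) : R :=
  match j with
  | 0 | 5 => 0 | 1 | 4 => 1 | 2 | 3 => t | 6 | 9 => -1 | _ => - t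
  end.

Lemma xi_exp (j : nat) : (j < 10)%N ->
  xi R ^+ j = cos5 (tau R) j +i* (sin (pi / 5%:R) * sin5 (tau R) j).
Proof.
have sin2 : sin (pi / 5%:R : R) ^+ 2 = (3 - tau R) / 4.
  by rewrite sin2cos2 cos_pi5 expr_div_n tau_sqr; lra.
have tau2 := tau_sqr.
(* products of the two relations, so that [lra] can treat monomials as atoms *)
have sin2_tau : sin (pi / 5%:R : R) ^+ 2 * tau R = (2 * tau R - 1) / 4.
  by rewrite sin2; lra.
have tau2_sin : tau R ^+ 2 * sin (pi / 5%:R) = (tau R + 1) * sin (pi / 5%:R).
  by rewrite tau2.
elim: j => [|j IH] j_lt; first by rewrite expr0 /= mulr0.
rewrite exprSr IH ?(ltnW j_lt) // /xi cos_pi5.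
case: j {IH} j_lt => [|[|[|[|[|[|[|[|[|[|j]]]]]]]]]] //= _; simpc.
all: by congr Complex; lra.
Qed.

Context {m : nat -> nat}.

Lemma sum_xi_exp :
  \sum_(j < 10) (m j)%:R * xi R ^+ j =
  (\sum_(j < 10) (m j)%:R * cos5 (tau R) j)
    +i* (sin (pi / 5%:R) * \sum_(j < 10) (m j)%:R * sin5 (tau R) j).
Proof.
apply/eqP; rewrite eq_complex /=; apply/andP; split; apply/eqP.
  rewrite raddf_sum; apply: eq_bigr => j _.
  by rewrite xi_exp // mulr_natl raddfMn /= mulr_natl.
rewrite raddf_sum mulr_sumr; apply: eq_bigr => j _.
by rewrite xi_exp // mulr_natl raddfMn /= mulr_natl mulrnAr.
Qed.

Lemma sum_sin5 (t : R) :
  \sum_(j < 10) (m j)%:R * sin5 t j =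
  ((m 1 + m 4)%:Z - (m 6 + m 9)%:Z)%:~R + ((m 2 + m 3)%:Z - (m 7 + m 8)%:Z)%:~R * t.
Proof. by rewrite !big_ord_recr big_ord0 /=; ring. Qed.

Lemma balanced_of_sum_sin5 :
  \sum_(j < 10) (m j)%:R * sin5 (tau R) j = 0 ->
  (m 1 + m 4 = m 6 + m 9)%N /\ (m 2 + m 3 = m 7 + m 8)%N.
Proof.
rewrite sum_sin5 => /tau_irrational [/eqP a0 /eqP b0].
by move: a0 b0; rewrite !subr_eq0 => /eqP[->] /eqP[->].
Qed.

Lemma sum_cos5_affine :
  (m 1 + m 4 = m 6 + m 9)%N -> (m 2 + m 3 = m 7 + m 8)%N ->
  exists a b : int, forall t : R,
    \sum_(j < 10) (m j)%:R * cos5 t j = a%:~R + b%:~R * t.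
Proof.
move=> /(congr1 (GRing.natmul (1 : R))) bal1 /(congr1 (GRing.natmul (1 : R))) bal2.
rewrite !natrD in bal1 bal2.
exists ((m 0 + m 3)%:Z - (m 5 + m 8)%:Z), ((m 8 + m 9)%:Z - (m 3 + m 4)%:Z) => t.
rewrite !big_ord_recr big_ord0 /=.
have -> : (m 1)%:R = (m 6)%:R + (m 9)%:R - (m 4)%:R :> R by lra.
have -> : (m 2)%:R = (m 7)%:R + (m 8)%:R - (m 3)%:R :> R by lra.
by field.
Qed.

Lemma cos5_le1 (t : R) (j : nat) : -1 <= t <= 2 -> `|cos5 t j| <= 1.
Proof.
move=> t_itv; rewrite ler_norml.
by case: j => [|[|[|[|[|[|[|[|[|[|j]]]]]]]]]] /=; lra.
Qed.

End Pentagon.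

Theorem proposition6p9 (R : realType) (n : nat) (hn : (0 < n)%N) :
  @Lset R n `<=` Sigma `[- (n%:R : R), n%:R] `&` `[- (n%:R : R), n%:R].
Proof.
move=> x [m [m_le_n sum_eq_x]].
pose w k := m (inord k).
have {}sum_eq_x : \sum_(j < 10) (w j)%:R * xi R ^+ j = x%:C.
  by rewrite -sum_eq_x; apply: eq_bigr => j _; rewrite /w inord_val.
have {}m_le_n : (\sum_(j < 10) w j <= n)%N.
  by rewrite (eq_bigr m) // => j _; rewrite /w inord_val.
move: sum_eq_x; rewrite sum_xi_exp => -[x_cos5 /eqP].
rewrite mulf_eq0 (gt_eqF sin_pi5_gt0) /= => /eqP /balanced_of_sum_sin5[bal1 bal2].
have [a [b cos5_ab]] := sum_cos5_affine (R := R) bal1 bal2.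
have norm_le (t : R) : -1 <= t <= 2 -> `|\sum_(j < 10) (w j)%:R * cos5 t j| <= n%:R.
  move=> t_itv; rewrite (le_trans (norm_sum_natrM_le1 _ _ _ _ _)) ?ler_nat //.
  by move=> j; apply: cos5_le1.
have in_itv_n (y : R) : `|y| <= n%:R -> `[- (n%:R : R), n%:R] y.
  by rewrite /= in_itv /= -ler_norml.
have tau_itv := @tau_ge1_le2 R.
split; last by apply: in_itv_n; rewrite -x_cos5 norm_le //; lra.
exists a, b; split; first by rewrite -x_cos5 cos5_ab.
by apply: in_itv_n; rewrite -cos5_ab norm_le // tau'E; lra.
Qed.
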